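(* Let $g\colon\mathbb{R}^d\to\mathbb{R}$ be differentiable with $L_1$-Lipschitz gradient, and let $G$ be an $(a,b)$-inexact gradient oracle for $g$ with $0\le a\le1/20$, $b\ge0$. Let $0<\eta\le\min\{1,1/L_1\}$, $y_0\in\mathbb{R}^d$, and $y_{t+1}=y_t-\eta G(y_t)$. Then for all integers $0\le\tau\le t$, $$\|y_\tau-y_0\|^2\le16\eta t\frac{(1+a)^2}{1-a}\Big(g(y_0)-g(y_t)+(5+\eta)tb^2\Big).$$
   Context: A map $G\colon\mathbb{R}^d\to\mathbb{R}^d$ is an $(a,b)$-inexact gradient oracle for $g$ if $\|\nabla g(x)-G(x)\|\le a\|\nabla g(x)\|+b$ for all $x\in\mathbb{R}^d$. *)

(* R^d is rendered as row vectors 'rV[R]_d. *)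
From HB Require Import structures.
From mathcomp Require Import all_boot all_order all_algebra.
From mathcomp Require Import all_classical all_reals all_analysis.
Set Implicit Arguments. Unset Strict Implicit. Unset Printing Implicit Defensive.
Import Order.TTheory GRing.Theory Num.Theory.
Import numFieldNormedType.Exports.
Local Open Scope ring_scope.

Definition dotv {R : realType} {d : nat} (u v : 'rV[R]_d) : R :=
  \sum_(i < d) u 0 i * v 0 i.

Definition enorm {R : realType} {d : nat} (u : 'rV[R]_d) : R :=
  Num.sqrt (dotv u u).

Definition is_gradient {R : realType} {d : nat}
  (g : 'rV[R]_d -> R) (gradg : 'rV[R]_d -> 'rV[R]_d) : Prop :=
  forall x, differentiable g x /\ forall h, 'd g x h = dotv (gradg x) h.

Definition inexact_oracle {R : realType} {d : nat}
  (gradg G : 'rV[R]_d -> 'rV[R]_d) (a b : R) : Prop :=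
  forall x, enorm (gradg x - G x) <= a * enorm (gradg x) + b.

(* Write x_s = |G(y_s)| for the length of the oracle output at step s and
   E_n = x_0^2 + ... + x_(n-1)^2 for the accumulated squared step lengths.
   The proof has three independent ingredients.
   1. Descent lemma: an L-smooth g satisfies
        g(x + h) <= g(x) + <grad g(x), h> + L/2 |h|^2
      (mean value theorem on s |-> g(x + s h), Cauchy-Schwarz, Lipschitz).
   2. Sufficient decrease: because the oracle error e_s = |grad g(y_s) - G(y_s)|
      satisfies e_s x_s <= x_s^2/3 + 2 b^2 when a <= 1/20, one step with
      eta L <= 1 gives g(y_(s+1)) <= g(y_s) - eta/6 x_s^2 + 2 eta b^2;
      telescoping yields eta/6 E_t <= g(y_0) - g(y_t) + 2 eta t b^2.
   3. Displacement: by the triangle inequality and Cauchy-Schwarz for sums,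
      |y_k - y_0|^2 <= k eta^2 E_k.
   Combining 2 and 3 (with tau <= t and E monotone) gives the bound with
   constant 6, which is weakened to 16 (1+a)^2/(1-a) and (5 + eta) b^2. *)

From HB Require Import structures.
From mathcomp Require Import all_boot all_order all_algebra.
From mathcomp Require Import all_classical all_reals all_analysis.
From mathcomp Require Import lra ring.
Import Order.TTheory GRing.Theory Num.Theory.
Import numFieldNormedType.Exports.
Local Open Scope ring_scope.

Section EuclideanSpace.
Context {R : realType} {d : nat}.
Implicit Types u v w : 'rV[R]_d.

Lemma dotvC u v : dotv u v = dotv v u.
Proof. by apply: eq_bigr => i _; rewrite mulrC. Qed.

Lemma dotvDl u v w : dotv (u + v) w = dotv u w + dotv v w.
Proof. by rewrite /dotv -big_split; apply: eq_bigr => i _; rewrite !mxE mulrDl. Qed.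

Lemma dotvZl k u w : dotv (k *: u) w = k * dotv u w.
Proof. by rewrite /dotv mulr_sumr; apply: eq_bigr => i _; rewrite !mxE mulrA. Qed.

Lemma dotvNl u w : dotv (- u) w = - dotv u w.
Proof. by rewrite -scaleN1r dotvZl mulN1r. Qed.

Lemma dotvBl u v w : dotv (u - v) w = dotv u w - dotv v w.
Proof. by rewrite dotvDl dotvNl. Qed.

Lemma dotvDr u v w : dotv w (u + v) = dotv w u + dotv w v.
Proof. by rewrite dotvC dotvDl !(dotvC w). Qed.

Lemma dotvZr k u w : dotv w (k *: u) = k * dotv w u.
Proof. by rewrite dotvC dotvZl dotvC. Qed.

Lemma dotvBr u v w : dotv w (u - v) = dotv w u - dotv w v.
Proof. by rewrite !(dotvC w) dotvBl. Qed.

Lemma dotv_ge0 u : 0 <= dotv u u.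
Proof. by apply: sumr_ge0 => i _; rewrite -expr2 sqr_ge0. Qed.

Lemma dotv_eq0 u : dotv u u = 0 -> u = 0.
Proof.
move=> /eqP; rewrite psumr_eq0 => [/allP u0|i _]; last by rewrite -expr2 sqr_ge0.
apply/matrixP => i j; rewrite mxE (ord1 i).
by have := u0 j (mem_index_enum j); rewrite -expr2 sqrf_eq0 => /eqP ->.
Qed.

Lemma enorm_ge0 u : 0 <= enorm u.
Proof. exact: sqrtr_ge0. Qed.

Lemma enorm_sq u : enorm u ^+ 2 = dotv u u.
Proof. by rewrite sqr_sqrtr // dotv_ge0. Qed.

(* Cauchy-Schwarz, squared form: nonnegativity of |<u,u> v - <u,v> u|^2. *)
Lemma dotv_CS_sq u v : dotv u v ^+ 2 <= dotv u u * dotv v v.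
Proof.
have [uu0|uu_neq0] := eqVneq (dotv u u) 0.
  have -> : dotv u v = 0.
    by rewrite (dotv_eq0 _ uu0) /dotv big1 // => i _; rewrite mxE mul0r.
  by rewrite expr0n /= mulr_ge0 ?dotv_ge0.
have := dotv_ge0 (dotv u u *: v - dotv u v *: u).
rewrite !dotvBl !dotvBr !dotvZl !dotvZr (dotvC v u).
have uu_gt0 : 0 < dotv u u by rewrite lt_neqAle eq_sym uu_neq0 dotv_ge0.
set A := dotv u u; set B := dotv u v; set C := dotv v v => expand_ge0.
have : 0 <= A * (A * C - B ^+ 2) by nra.
by rewrite pmulr_rge0 //; lra.
Qed.

Lemma dotv_CS u v : dotv u v <= enorm u * enorm v.
Proof.
rewrite /enorm -sqrtrM ?dotv_ge0 //; apply: le_trans (ler_norm _) _.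
by rewrite -sqrtr_sqr ler_sqrt ?dotv_CS_sq // mulr_ge0 ?dotv_ge0.
Qed.

Lemma enormD u v : enorm (u + v) <= enorm u + enorm v.
Proof.
have cs := dotv_CS u v; have u0 := enorm_ge0 u; have v0 := enorm_ge0 v.
have uv0 := enorm_ge0 (u + v).
have : enorm (u + v) ^+ 2 <= (enorm u + enorm v) ^+ 2.
  by rewrite enorm_sq dotvDl !dotvDr (dotvC v u) -!enorm_sq; nra.
nra.
Qed.

Lemma enormZ k u : 0 <= k -> enorm (k *: u) = k * enorm u.
Proof.
move=> k0; rewrite /enorm dotvZl dotvZr mulrA sqrtrM ?mulr_ge0 //.
by rewrite -expr2 sqrtr_sqr ger0_norm.
Qed.

Lemma enormN u : enorm (- u) = enorm u.
Proof. by rewrite /enorm dotvNl dotvC dotvNl opprK. Qed.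

End EuclideanSpace.

Lemma line_derivative {R : realType} {d : nat} {g : 'rV[R]_d -> R}
  {gradg : 'rV[R]_d -> 'rV[R]_d} (x h : 'rV[R]_d) (s : R) :
  is_gradient g gradg ->
  is_derive s 1 (fun s : R => g (s *: h + x)) (dotv (gradg (s *: h + x)) h).
Proof.
move=> grad_g; pose line := fun s : R => s *: h + x.
have d_scale : differentiable (fun s : R => s *: h) s.
  exact: (@ex_diff _ _ _ _ _ _ _ (is_diff_scalel s h)).
have d_cst : differentiable (fun _ : R => x) s by exact: differentiable_cst.
have d_line : differentiable line s by apply: differentiableD.
have line_velocity : 'd line s 1 = h.
  rewrite (_ : line = (fun s : R => s *: h) + (fun _ => x)) //.
  rewrite (diffD d_scale d_cst) /=.
  have d_scale1 : 'd ( *:%R^~ h) s 1 = 1 *: h.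
    by have := congr1 (fun F => F 1) (@diff_val _ _ _ _ _ _ _ (is_diff_scalel s h)).
  have d_cst1 : 'd (cst x) s (1 : R) = 0 :> 'rV[R]_d.
    by have := congr1 (fun F => F (1 : R)) (@diff_cst _ _ _ x s).
  by rewrite [X in X + _ = _]d_scale1 [X in _ + X = _]d_cst1 scale1r addr0.
have [d_g dg_val] := grad_g (line s).
have d_comp : differentiable (g \o line) s by apply: differentiable_comp.
apply: DeriveDef; first exact: diff_derivable.
rewrite (_ : (fun s : R => g (s *: h + x)) = g \o line) //.
by rewrite deriveE // diff_comp //= line_velocity dg_val.
Qed.

Lemma gradient_increment {R : realType} {d : nat} {gradg : 'rV[R]_d -> 'rV[R]_d}
  {L : R} (c : R) (x h : 'rV[R]_d) :
  (forall x z, enorm (gradg x - gradg z) <= L * enorm (x - z)) -> 0 <= c ->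
  dotv (gradg (c *: h + x) - gradg x) h <= L * c * dotv h h.
Proof.
move=> lip c0; apply: le_trans (dotv_CS _ _) _.
have := lip (c *: h + x) x; rewrite addrK enormZ // => lip_ch.
rewrite -enorm_sq expr2 !mulrA -[L * c * _](mulrA L).
by apply: ler_wpM2r; first exact: enorm_ge0.
Qed.

(* Descent lemma for an L-smooth function, via the mean value theorem applied
   to psi(s) = g(s h + x) - s <grad g(x), h> - s^2 L/2 |h|^2 on [0,1]. *)
Lemma descent_lemma {R : realType} {d : nat} {g : 'rV[R]_d -> R}
  {gradg : 'rV[R]_d -> 'rV[R]_d} {L : R} (x h : 'rV[R]_d) :
  is_gradient g gradg ->
  (forall x z, enorm (gradg x - gradg z) <= L * enorm (x - z)) ->
  g (h + x) <= g x + dotv (gradg x) h + L / 2 * dotv h h.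
Proof.
move=> grad_g lip.
set c1 := dotv (gradg x) h; set C := dotv h h.
pose psi := (fun s : R => g (s *: h + x)) - c1 \*: (@id R)
  - (L / 2 * C) \*: ((@id R) * (@id R)).
pose dpsi := fun s : R =>
  dotv (gradg (s *: h + x)) h - c1 *: 1 - (L / 2 * C) *: (s *: 1 + s *: 1).
have psi_deriv (s : R) : is_derive s 1 psi (dpsi s).
  have id_deriv : is_derive s 1 (@id R) 1 by exact: is_derive_id.
  exact: is_deriveB (is_deriveB (line_derivative x h s grad_g)
    (is_deriveZ c1 id_deriv)) (is_deriveZ (L / 2 * C) (is_deriveM id_deriv id_deriv)).
have [c c_in mvt] : exists2 c, c \in `]0, 1[%R & psi 1 - psi 0 = dpsi c * (1 - 0).
  apply: MVT; first exact: ltr01.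
  apply: derivable_within_continuous => s _.
  exact: (@ex_derive _ _ _ _ _ _ _ (psi_deriv s)).
have c0 : 0 <= c by move: c_in; rewrite in_itv /= => /andP[/ltW].
have psi0 : psi 0 = g x.
  have -> : psi 0 = g (0 *: h + x) - c1 * 0 - L / 2 * C * (0 * 0) by [].
  by rewrite scale0r add0r !mulr0 !subr0.
have psi1 : psi 1 = g (h + x) - c1 - L / 2 * C.
  have -> : psi 1 = g (1 *: h + x) - c1 * 1 - L / 2 * C * (1 * 1) by [].
  by rewrite scale1r !mulr1.
have := gradient_increment c x h lip c0; rewrite dotvBl -/c1 -/C => incr.
have dpsi_c : dpsi c = dotv (gradg (c *: h + x)) h - c1 * 1
  - (L / 2 * C) * (c * 1 + c * 1) by [].
by move: mvt; rewrite psi0 psi1 dpsi_c subr0 !mulr1; lra.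
Qed.

Lemma oracle_error_product {R : realType} {a b x e gn : R} :
  0 <= a -> a <= 1 / 20 -> 0 <= b -> 0 <= x -> 0 <= e ->
  e <= a * gn + b -> gn <= e + x -> e * x <= x ^+ 2 / 3 + 2 * b ^+ 2.
Proof.
move=> a0 a_small b0 x0 e0 err_le grad_le.
have e_le : 19 * e <= x + 20 * b by nra.
have ex_le : 19 * (e * x) <= x ^+ 2 + 20 * b * x by nra.
have sq_ge0 : 0 <= 5 * (x - 2 * b) ^+ 2 by rewrite mulr_ge0 // sqr_ge0.
nra.
Qed.

Lemma sum_sq_step {R : realType} {D D' Q K P : R} :
  0 <= D -> 0 <= D' -> 0 <= Q -> 0 <= K -> 0 <= P ->
  D ^+ 2 <= K * P -> D' <= D + Q -> D' ^+ 2 <= (K + 1) * (P + Q ^+ 2).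
Proof.
move=> D0 D'0 Q0 K0 P0 DKP D'_le.
have cross : 2 * D * Q <= P + K * Q ^+ 2.
  have [K_eq0|K_neq0] := eqVneq K 0.
    rewrite K_eq0 mul0r in DKP.
    have D_eq0 : D = 0 by apply/eqP; rewrite -sqrf_eq0 eq_le DKP sqr_ge0.
    by rewrite D_eq0 K_eq0 mulr0 !mul0r addr0.
  have K_gt0 : 0 < K by rewrite lt_neqAle eq_sym K_neq0 K0.
  have sq_ge0 : 0 <= (K * Q - D) ^+ 2 by exact: sqr_ge0.
  have : K * (2 * D * Q) <= K * (P + K * Q ^+ 2) by nra.
  by rewrite ler_pM2l.
have D'_sq : D' ^+ 2 <= (D + Q) ^+ 2 by rewrite ler_sqr ?nnegrE ?addr_ge0.
nra.
Qed.

Definition step_energy {R : realType} {d : nat} (G : 'rV[R]_d -> 'rV[R]_d)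
  (y : nat -> 'rV[R]_d) (n : nat) : R :=
  \sum_(s < n) enorm (G (y s)) ^+ 2.

Section InexactGradientDescent.
Context {R : realType} {d : nat} {g : 'rV[R]_d -> R}.
Context {gradg G : 'rV[R]_d -> 'rV[R]_d} {L1 a b eta : R}.
Context {y : nat -> 'rV[R]_d}.
Hypothesis grad_g : is_gradient g gradg.
Hypothesis lip : forall x z, enorm (gradg x - gradg z) <= L1 * enorm (x - z).
Hypotheses (a0 : 0 <= a) (a_small : a <= 1 / 20) (b0 : 0 <= b).
Hypothesis oracle : inexact_oracle gradg G a b.
Hypotheses (eta_gt0 : 0 < eta) (eta_L1 : eta * L1 <= 1).
Hypothesis y_step : forall t, y t.+1 = y t - eta *: G (y t).

Local Notation E := (step_energy G y).

Lemma step_energyS n : E n.+1 = E n + enorm (G (y n)) ^+ 2.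
Proof. by rewrite /step_energy big_ord_recr. Qed.

Lemma step_energy_ge0 n : 0 <= E n.
Proof. by apply: sumr_ge0 => i _; exact: sqr_ge0. Qed.

Lemma step_energy_mono m n : (m <= n)%N -> E m <= E n.
Proof.
elim: n => [|n IH]; first by rewrite leqn0 => /eqP ->.
rewrite leq_eqVlt => /orP[/eqP -> // | /IH E_le].
by rewrite step_energyS (le_trans E_le) // lerDl sqr_ge0.
Qed.

Lemma one_step_decrease s :
  g (y s.+1) <= g (y s) - eta / 6 * enorm (G (y s)) ^+ 2 + 2 * eta * b ^+ 2.
Proof.
set v := G (y s); set w := gradg (y s).
have x0 : 0 <= enorm v := enorm_ge0 v.
have grad_le : enorm w <= enorm (w - v) + enorm v.
  by have := enormD (w - v) v; rewrite subrK.
have err_prod : enorm (w - v) * enorm v <= enorm v ^+ 2 / 3 + 2 * b ^+ 2.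
  exact: oracle_error_product a0 a_small b0 x0 (enorm_ge0 _) (oracle (y s)) grad_le.
have err_dot : enorm v ^+ 2 - enorm (w - v) * enorm v <= dotv w v.
  have := dotv_CS (v - w) v.
  by rewrite dotvBl -enorm_sq -(enormN (v - w)) opprB; lra.
have smooth : L1 / 2 * (eta ^+ 2 * enorm v ^+ 2) <= eta / 2 * enorm v ^+ 2.
  have smooth_gap : 0 <= eta * enorm v ^+ 2 * (1 - eta * L1).
    by rewrite !mulr_ge0 ?sqr_ge0 ?subr_ge0 ?(ltW eta_gt0).
  lra.
have dec : eta * (enorm v ^+ 2 - enorm v ^+ 2 / 3 - 2 * b ^+ 2) <= eta * dotv w v.
  by rewrite ler_pM2l //; lra.
have := descent_lemma (y s) (- (eta *: v)) grad_g lip.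
rewrite addrC -y_step -scaleNr dotvZr dotvZl dotvZr -enorm_sq.
have -> : (- eta) * ((- eta) * enorm v ^+ 2) = eta ^+ 2 * enorm v ^+ 2 by ring.
lra.
Qed.

Lemma energy_bound n :
  eta / 6 * E n <= g (y 0%N) - g (y n) + 2 * eta * n%:R * b ^+ 2.
Proof.
elim: n => [|n IH].
  by rewrite /step_energy big_ord0 mulr0n !mulr0 subrr !mul0r addr0.
rewrite step_energyS -[n.+1%:R]natr1.
have := one_step_decrease n; nra.
Qed.

Lemma displacement_bound k : enorm (y k - y 0%N) ^+ 2 <= k%:R * (eta ^+ 2 * E k).
Proof.
elim: k => [|k IH].
  by rewrite subrr -(scale0r (0 : 'rV[R]_d)) enormZ // !mul0r expr0n.
have tri : enorm (y k.+1 - y 0%N) <= enorm (y k - y 0%N) + eta * enorm (G (y k)).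
  have -> : y k.+1 - y 0%N = (y k - y 0%N) + - (eta *: G (y k)).
    by rewrite y_step addrAC.
  by apply: le_trans (enormD _ _) _; rewrite enormN enormZ // ltW.
rewrite step_energyS -[k.+1%:R]natr1 mulrDr -exprMn.
apply: sum_sq_step IH tri;
  by rewrite ?mulr_ge0 ?sqr_ge0 ?enorm_ge0 ?ler0n ?(ltW eta_gt0) ?step_energy_ge0.
Qed.

End InexactGradientDescent.

Lemma oracle_factor_ge1 {R : realType} {a : R} :
  0 <= a -> a < 1 -> 1 <= (1 + a) ^+ 2 / (1 - a).
Proof. by move=> a0 a_lt1; rewrite ler_pdivlMr ?subr_gt0 // mul1r; nra. Qed.

Lemma weaken_displacement_bound {R : realType} {eta T En F Dg b D2 : R} :
  0 < eta -> eta <= 1 -> 0 <= T -> 0 <= En -> 1 <= F ->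
  D2 <= T * (eta ^+ 2 * En) -> eta / 6 * En <= Dg + 2 * eta * T * b ^+ 2 ->
  D2 <= 16 * eta * T * F * (Dg + (5 + eta) * T * b ^+ 2).
Proof.
move=> eta_gt0 eta_le1 T0 En0 F1 D2_le energy.
set Q := Dg + 2 * eta * T * b ^+ 2; set Q' := Dg + (5 + eta) * T * b ^+ 2.
have etaT0 : 0 <= eta * T by rewrite mulr_ge0 // ltW.
have Q0 : 0 <= Q by apply: le_trans energy; rewrite mulr_ge0 ?divr_ge0 // ltW.
have Tb0 : 0 <= T * b ^+ 2 by rewrite mulr_ge0 ?sqr_ge0.
have QQ' : Q <= Q' by rewrite lerD2l; nra.
have D2_Q : D2 <= 6 * (eta * T) * Q.
  apply: le_trans D2_le _.
  have -> : T * (eta ^+ 2 * En) = 6 * (eta * T) * (eta / 6 * En) by field.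
  by apply: ler_wpM2l => //; lra.
have Q'0 : 0 <= eta * T * Q' by rewrite mulr_ge0 // (le_trans Q0 QQ').
nra.
Qed.

Theorem mainTheorem3 (R : realType) (d : nat)
  (g : 'rV[R]_d -> R) (gradg G : 'rV[R]_d -> 'rV[R]_d)
  (L1 a b eta : R) (y : nat -> 'rV[R]_d) :
  is_gradient g gradg ->
  0 <= L1 ->
  (forall x z, enorm (gradg x - gradg z) <= L1 * enorm (x - z)) ->
  0 <= a -> a <= 1 / 20 -> 0 <= b ->
  inexact_oracle gradg G a b ->
  0 < eta -> eta <= 1 -> eta * L1 <= 1 ->
  (forall t, y t.+1 = y t - eta *: G (y t)) ->
  forall t tau : nat, (tau <= t)%N ->
    enorm (y tau - y 0%N) ^+ 2 <=
      16 * eta * t%:R * ((1 + a) ^+ 2 / (1 - a)) *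
      (g (y 0%N) - g (y t) + (5 + eta) * t%:R * b ^+ 2).
Proof.
move=> grad_g _ lip a0 a_small b0 oracle eta_gt0 eta_le1 eta_L1 y_step t tau tau_le.
have energy := energy_bound grad_g lip a0 a_small b0 oracle eta_gt0 eta_L1 y_step t.
have disp_t : enorm (y tau - y 0%N) ^+ 2 <= t%:R * (eta ^+ 2 * step_energy G y t).
  apply: le_trans (displacement_bound eta_gt0 y_step tau) _.
  have eta2_ge0 : 0 <= eta ^+ 2 := sqr_ge0 eta.
  apply: ler_pM; first exact: ler0n.
  - exact: mulr_ge0 eta2_ge0 (step_energy_ge0 _).
  - by rewrite ler_nat.
  - by apply: ler_wpM2l => //; exact: step_energy_mono.
apply: weaken_displacement_bound disp_t energy; rewrite ?ler0n ?step_energy_ge0 //.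
by apply: oracle_factor_ge1; lra.
Qed.
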